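(* Let $F \subseteq \mathbb{Z}_2^\omega$ be a set such that Alter has a winning strategy in the game $\mathcal{G}(F)$. Then there exists an equivalence class $X$ of the relation $\sim$ on $\mathbb{Z}_2^\omega$ such that $X\cap F=\emptyset$.
   Context: $\mathbb{Z}_2^\omega$ is the set of infinite binary sequences indexed by $\omega=\{0,1,2,\dots\}$; $\mathbb{Z}_2^+=\bigcup_{n\ge1}\mathbb{Z}_2^n$ is the set of nonempty finite binary words. The Hamming distance is $\mathrm{hd}(x,y)=|\{k: x(k)\ne y(k)\}|\in\omega\cup\{\omega\}$, and $x\sim y$ iff $\mathrm{hd}(x,y)$ is finite. For $F\subseteq \mathbb{Z}_2^\omega$, $\mathcal{G}(F)$ is the following infinite two-player game of perfect information: players Ego and Alter alternately choose words in $\mathbb{Z}_2^+$, Ego moving first; if the moves are $\epsilon_0,\alpha_1,\epsilon_1,\alpha_2,\dots$, the outcome is the concatenation $\epsilon_0\alpha_1\epsilon_1\alpha_2\cdots\in\mathbb{Z}_2^\omega$. Ego wins if the outcome lies in $F$, otherwise Alter wins. A strategy for Alter is a function $a:\bigcup_{n\ge1}(\mathbb{Z}_2^+)^n\to\mathbb{Z}_2^+$ (Alter's $i$-th move being $\alpha_i=a(\epsilon_0,\dots,\epsilon_{i-1})$); it is winning if every play in which Alter follows it has outcome not in $F$. *)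

From Stdlib Require Import List Arith.
Import ListNotations.

Definition seq2 := nat -> bool.

Definition word := { w : list bool | w <> [] }.
Definition wlist (w : word) : list bool := proj1_sig w.

(* x ~ y : the Hamming distance is finite, i.e. x and y differ in only
   finitely many coordinates (all differences lie below some bound N). *)
Definition hd_finite (x y : seq2) : Prop :=
  exists N : nat, forall k, N <= k -> x k = y k.

(* Concatenation of an infinite sequence of nonempty words b_0 b_1 b_2 ...
   [concat_aux fuel j n] is the n-th letter of b_j b_{j+1} ... ; since every
   word is nonempty, fuel n+1 suffices. *)
Fixpoint concat_aux (b : nat -> word) (fuel j n : nat) : bool :=
  match fuel with
  | 0 => false
  | S f =>
      if n <? length (wlist (b j)) then nth n (wlist (b j)) false
      else concat_aux b f (S j) (n - length (wlist (b j)))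
  end.

Definition concat_words (b : nat -> word) : seq2 :=
  fun n => concat_aux b (S n) 0 n.

(* A strategy for Alter: a function on nonempty finite sequences of words,
   a sequence (e_0, e_1, ..., e_{i-1}) being given as [a e_0 [e_1;...;e_{i-1}]]. *)
Definition alter_strategy := word -> list word -> word.

Definition ego_tail (e : nat -> word) (i : nat) : list word :=
  map e (seq 1 (i - 1)).

Definition alter_move (a : alter_strategy) (e : nat -> word) (i : nat) : word :=
  a (e 0) (ego_tail e i).

(* The sequence of moves e_0, alpha_1, e_1, alpha_2, e_2, ... *)
Definition play_blocks (a : alter_strategy) (e : nat -> word) (j : nat) : word :=
  if Nat.even j then e (Nat.div2 j) else alter_move a e (S (Nat.div2 j)).

Definition outcome (a : alter_strategy) (e : nat -> word) : seq2 :=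
  concat_words (play_blocks a e).

Definition alter_winning (F : seq2 -> Prop) (a : alter_strategy) : Prop :=
  forall e : nat -> word, ~ F (outcome a e).

From Stdlib Require Import List Arith Lia Cantor ConstructiveEpsilon FunctionalExtensionality.
From mathcomp Require Import choice.
Import ListNotations.

(* The point x is the limit of finite words
   X_0 ⊑ X_1 ⊑ ..., built while running, for every finite word v, a play of Ego
   against a whose outcome so far is always a prefix of v X_n[|v|..].  At a stage
   devoted to v, X_n is padded to length |v|, Ego's next move completes the
   outcome of the v-play to v X_n[|v|..] followed by one extra letter (so that
   the move is nonempty), and that letter and Alter's reply are appended to X_n.
   Every v is treated infinitely often, so the v-play is infinite with outcome
   v x[|v|..].  Every y ~ x has this form, v being a long enough prefix of y,
   hence y is not in F. *)

Lemma wlist_length_pos (w : word) : 1 <= length (wlist w).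
Proof. destruct w as [[|c l] H]; simpl; [contradiction | lia]. Qed.

Definition pad_word (l : list bool) : word :=
  exist (fun w => w <> []) (l ++ [false]) (fun H => app_cons_not_nil l [] false (eq_sym H)).

Definition is_prefix {A : Type} (p l : list A) : Prop := exists r, l = p ++ r.

Lemma is_prefix_refl {A : Type} (l : list A) : is_prefix l l.
Proof. exists []. now rewrite app_nil_r. Qed.

Lemma is_prefix_app {A : Type} (l r : list A) : is_prefix l (l ++ r).
Proof. now exists r. Qed.

Lemma is_prefix_trans {A : Type} (p q l : list A) :
  is_prefix p q -> is_prefix q l -> is_prefix p l.
Proof. intros [x ->] [y ->]. exists (x ++ y). now rewrite app_assoc. Qed.

Lemma app_pad_word_skipn (p l : list bool) :
  is_prefix p l -> p ++ wlist (pad_word (skipn (length p) l)) = l ++ [false].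
Proof.
  intros [r ->]. cbn. rewrite skipn_app, skipn_all, Nat.sub_diag, app_assoc. reflexivity.
Qed.

Definition agrees (l : list bool) (y : seq2) : Prop :=
  forall n, n < length l -> nth n l false = y n.

Lemma agrees_prefix p l y : is_prefix p l -> agrees l y -> agrees p y.
Proof.
  intros [r ->] H n Hn. rewrite <- H by (rewrite length_app; lia).
  now rewrite app_nth1.
Qed.

Lemma agrees_map_seq (y : seq2) N : agrees (map y (seq 0 N)) y.
Proof.
  intros n Hn. rewrite length_map, length_seq in Hn.
  rewrite (nth_indep _ false (y 0)) by (rewrite length_map, length_seq; lia).
  now rewrite map_nth, seq_nth.
Qed.

Definition splice (u X : list bool) : list bool := u ++ skipn (length u) X.

Lemma is_prefix_splice_app u X Z : is_prefix (splice u X) (splice u (X ++ Z)).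
Proof. unfold splice. rewrite skipn_app, app_assoc. apply is_prefix_app. Qed.

Lemma splice_app u X Z : length u <= length X -> splice u (X ++ Z) = splice u X ++ Z.
Proof.
  intros H. unfold splice. rewrite skipn_app.
  replace (length u - length X) with 0 by lia. now rewrite app_assoc.
Qed.

Lemma agrees_splice u X x y :
  agrees u y -> agrees X x -> (forall n, length u <= n -> x n = y n) ->
  agrees (splice u X) y.
Proof.
  intros Hu HX Hxy n Hn. unfold splice in *.
  rewrite length_app, length_skipn in Hn.
  destruct (Nat.lt_ge_cases n (length u)) as [Hlt | Hge].
  - rewrite app_nth1 by lia. now apply Hu.
  - rewrite app_nth2, nth_skipn by lia.
    replace (length u + (n - length u)) with n by lia.
    rewrite HX by lia. apply Hxy. lia.
Qed.

Definition concat_range (b : nat -> word) (j m : nat) : list bool :=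
  concat (map (fun i => wlist (b i)) (seq j m)).

Lemma concat_range_S b j m : concat_range b j (S m) = wlist (b j) ++ concat_range b (S j) m.
Proof. reflexivity. Qed.

Lemma concat_aux_nth b f j m n :
  n < f -> n < length (concat_range b j m) ->
  concat_aux b f j n = nth n (concat_range b j m) false.
Proof.
  revert j m n. induction f as [|f IH]; intros j m n Hf Hn; [lia |].
  destruct m as [|m]; [cbv [concat_range] in Hn; cbn in Hn; lia |].
  rewrite concat_range_S, length_app in *. simpl.
  destruct (Nat.ltb_spec n (length (wlist (b j)))).
  - now rewrite app_nth1.
  - pose proof (wlist_length_pos (b j)).
    rewrite app_nth2 by lia. apply IH; lia.
Qed.

Lemma concat_words_nth b m n :
  n < length (concat_range b 0 m) -> concat_words b n = nth n (concat_range b 0 m) false.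
Proof. intros Hn. apply concat_aux_nth; [lia | exact Hn]. Qed.

Definition play_prefix (a : alter_strategy) (e : nat -> word) (k : nat) : list bool :=
  concat_range (play_blocks a e) 0 (2 * k).

Lemma play_prefix_S a e k :
  play_prefix a e (S k) = play_prefix a e k ++ wlist (e k) ++ wlist (alter_move a e (S k)).
Proof.
  unfold play_prefix, concat_range. replace (2 * S k) with (2 * k + 2) by lia.
  rewrite seq_app, map_app, concat_app. f_equal.
  replace (seq (0 + 2 * k) 2) with [2 * k; 2 * k + 1] by (cbn; repeat f_equal; lia).
  unfold play_blocks. cbn [map concat].
  rewrite Nat.even_mul, Nat.even_odd, Nat.div2_double, Nat.div2_odd', app_nil_r.
  reflexivity.
Qed.

Lemma play_prefix_length a e k : k <= length (play_prefix a e k).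
Proof.
  induction k as [|k IH]; [lia |].
  rewrite play_prefix_S, !length_app. pose proof (wlist_length_pos (e k)). lia.
Qed.

Lemma alter_move_ext a e e' k :
  (forall i, i <= k -> e i = e' i) -> alter_move a e (S k) = alter_move a e' (S k).
Proof.
  intros H. unfold alter_move, ego_tail. rewrite H by lia. f_equal.
  apply map_ext_in. intros i Hi. apply in_seq in Hi. apply H. lia.
Qed.

Lemma play_prefix_ext a e e' k :
  (forall i, i < k -> e i = e' i) -> play_prefix a e k = play_prefix a e' k.
Proof.
  induction k as [|k IH]; intros H; [reflexivity |].
  rewrite !play_prefix_S, IH, H, (alter_move_ext a e e'); [reflexivity | ..];
    intros; try apply H; lia.
Qed.

Lemma outcome_of_prefixes a e y :
  (forall k, exists k', k <= k' /\ agrees (play_prefix a e k') y) -> outcome a e = y.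
Proof.
  intros H. apply functional_extensionality. intros n.
  destruct (H (S n)) as [k [Hk Hy]]. pose proof (play_prefix_length a e k).
  unfold outcome. rewrite (concat_words_nth _ (2 * k)) by (unfold play_prefix in *; lia).
  apply Hy. lia.
Qed.

Section PrefixChainLimit.

Variable L : nat -> list bool.
Hypothesis L_prefix : forall s, is_prefix (L s) (L (S s)).
Hypothesis L_length : forall s, s <= length (L s).

Definition chain_limit (n : nat) : bool := nth n (L (S n)) false.

Lemma is_prefix_chain s t : s <= t -> is_prefix (L s) (L t).
Proof.
  induction 1; [apply is_prefix_refl |]. eapply is_prefix_trans; eauto.
Qed.

Lemma agrees_chain_limit s : agrees (L s) chain_limit.
Proof.
  intros n Hn. unfold chain_limit.
  destruct (Nat.le_ge_cases s (S n)) as [Hst | Hst];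
    destruct (is_prefix_chain _ _ Hst) as [r ->].
  - now rewrite app_nth1.
  - specialize (L_length (S n)). now rewrite app_nth1 by lia.
Qed.

End PrefixChainLimit.

Section StableLimit.

Variables (T : Type) (E : nat -> nat -> T) (K : nat -> nat).
Hypothesis K_step : forall s, K s <= K (S s).
Hypothesis E_step : forall s i, i < K s -> E (S s) i = E s i.
Hypothesis K_unbounded : forall i, exists s, i < K s.

Lemma stable_le s t : s <= t -> K s <= K t /\ forall i, i < K s -> E t i = E s i.
Proof.
  induction 1 as [|t _ [HK HE]]; [auto |]. split.
  - specialize (K_step t). lia.
  - intros i Hi. rewrite E_step by lia. auto.
Qed.

Lemma stable_limit : exists e : nat -> T, forall s i, i < K s -> e i = E s i.
Proof.
  pose (witness i := proj1_sig (constructive_indefinite_ground_description_nat _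
                       (fun s => lt_dec i (K s)) (K_unbounded i))).
  assert (Hwitness : forall i, i < K (witness i)) by (intros i; apply proj2_sig).
  exists (fun i => E (witness i) i). intros s i Hi.
  destruct (Nat.le_ge_cases s (witness i)) as [Hst | Hst]; apply stable_le in Hst as [_ HE].
  - now apply HE.
  - symmetry. now apply HE, Hwitness.
Qed.

End StableLimit.

Definition schedule (t : nat) : list bool :=
  match @unpickle (list bool) (fst (Cantor.of_nat t)) with Some u => u | None => [] end.

Lemma schedule_recurrent u s : exists t, s <= t /\ schedule t = u.
Proof.
  exists (Cantor.to_nat (pickle u, s)). split.
  - pose proof (Cantor.to_nat_non_decreasing (pickle u) s). lia.
  - unfold schedule. rewrite Cantor.cancel_of_to. cbn [fst].
    now rewrite (@pickleK (list bool)).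
Qed.

Definition set_move (e : nat -> word) (k : nat) (w : word) : nat -> word :=
  fun i => if Nat.eqb i k then w else e i.

Section Construction.

Variable a : alter_strategy.

Record state := {
  built : list bool;
  ego : list bool -> nat -> word;
  rounds : list bool -> nat
}.

Definition step (s : state) (u : list bool) : state :=
  let X := built s ++ repeat false (length u - length (built s)) in
  let k := rounds s u in
  let o := play_prefix a (ego s u) k in
  let e := set_move (ego s u) k (pad_word (skipn (length o) (splice u X))) in
  {| built := X ++ false :: wlist (alter_move a e (S k));
     ego := fun v => if list_eq_dec Bool.bool_dec v u then e else ego s v;
     rounds := fun v => if list_eq_dec Bool.bool_dec v u then S k else rounds s v |}.

Definition initial : state :=
  {| built := []; ego := fun _ _ => pad_word []; rounds := fun _ => 0 |}.

Fixpoint stage (n : nat) : state :=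
  match n with 0 => initial | S n => step (stage n) (schedule n) end.

Definition consistent (s : state) : Prop :=
  forall v, is_prefix (play_prefix a (ego s v) (rounds s v)) (splice v (built s)).

Lemma step_consistent s u : consistent s -> consistent (step s u).
Proof.
  intros Hs v. cbn [built ego rounds step].
  destruct (list_eq_dec Bool.bool_dec v u) as [-> | _].
  - set (X := built s ++ repeat false (length u - length (built s))).
    set (k := rounds s u).
    assert (Ho : is_prefix (play_prefix a (ego s u) k) (splice u X)).
    { eapply is_prefix_trans; [apply Hs | apply is_prefix_splice_app]. }
    rewrite play_prefix_S, (play_prefix_ext a _ (ego s u)).
    2: { intros i Hi. unfold set_move. destruct (Nat.eqb_spec i k); [lia | easy]. }
    unfold set_move at 1. rewrite Nat.eqb_refl, app_assoc, app_pad_word_skipn by exact Ho.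
    rewrite splice_app, <- app_assoc; [apply is_prefix_refl |].
    unfold X. rewrite length_app, repeat_length. lia.
  - eapply is_prefix_trans; [apply Hs |]. rewrite <- app_assoc. apply is_prefix_splice_app.
Qed.

Lemma stage_consistent n : consistent (stage n).
Proof.
  induction n as [|n IH]; [intros v; now exists (splice v []) | now apply step_consistent].
Qed.

Lemma built_step n :
  is_prefix (built (stage n)) (built (stage (S n))) /\
  length (built (stage n)) < length (built (stage (S n))).
Proof.
  cbn [stage step built]. rewrite <- app_assoc. split; [apply is_prefix_app |].
  rewrite !length_app. cbn. lia.
Qed.

Lemma built_length n : n <= length (built (stage n)).
Proof. induction n as [|n IH]; [cbn; lia | pose proof (proj2 (built_step n)); lia]. Qed.

Definition limit_word : seq2 := chain_limit (fun n => built (stage n)).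

Lemma agrees_built_limit n : agrees (built (stage n)) limit_word.
Proof.
  apply (agrees_chain_limit (fun n => built (stage n)));
    [intros; apply built_step | apply built_length].
Qed.

Lemma rounds_step n v : rounds (stage n) v <= rounds (stage (S n)) v.
Proof.
  cbn [stage step rounds]. destruct (list_eq_dec Bool.bool_dec v (schedule n)); subst; lia.
Qed.

Lemma ego_step n v i :
  i < rounds (stage n) v -> ego (stage (S n)) v i = ego (stage n) v i.
Proof.
  intros Hi. cbn [stage step ego].
  destruct (list_eq_dec Bool.bool_dec v (schedule n)) as [<- | _]; [| reflexivity].
  unfold set_move. destruct (Nat.eqb_spec i (rounds (stage n) v)); [lia | reflexivity].
Qed.

Lemma rounds_scheduled t :
  rounds (stage (S t)) (schedule t) = S (rounds (stage t) (schedule t)).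
Proof.
  cbn [stage step rounds]. now destruct (list_eq_dec Bool.bool_dec (schedule t) (schedule t)).
Qed.

Lemma rounds_mono v s t : s <= t -> rounds (stage s) v <= rounds (stage t) v.
Proof. induction 1 as [|t _ IH]; [lia | pose proof (rounds_step t v); lia]. Qed.

Lemma rounds_unbounded v i : exists s, i < rounds (stage s) v.
Proof.
  assert (Hgrow : forall s, exists t, rounds (stage s) v < rounds (stage t) v).
  { intros s. destruct (schedule_recurrent v s) as [t [Hst <-]]. exists (S t).
    rewrite rounds_scheduled. pose proof (rounds_mono (schedule t) _ _ Hst). lia. }
  induction i as [|i [s Hs]].
  - destruct (Hgrow 0) as [t Ht]. exists t. lia.
  - destruct (Hgrow s) as [t Ht]. exists t. lia.
Qed.

Lemma exists_play_outcome v y :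
  agrees v y -> (forall n, length v <= n -> limit_word n = y n) -> exists e, outcome a e = y.
Proof.
  intros Hv Hy.
  destruct (stable_limit _ (fun n => ego (stage n) v) (fun n => rounds (stage n) v)
              (fun n => rounds_step n v) (fun n => ego_step n v) (rounds_unbounded v))
    as [e He].
  exists e. apply outcome_of_prefixes. intros k.
  destruct (rounds_unbounded v k) as [s Hs].
  exists (rounds (stage s) v). split; [lia |].
  rewrite (play_prefix_ext a e (ego (stage s) v)) by auto.
  eapply agrees_prefix; [apply stage_consistent |].
  apply agrees_splice with limit_word; auto using agrees_built_limit.
Qed.

End Construction.

Theorem proposition7 (F : seq2 -> Prop) :
  (exists a : alter_strategy, alter_winning F a) ->
  exists x : seq2, forall y : seq2, hd_finite x y -> ~ F y.
Proof.
  intros [a Ha]. exists (limit_word a). intros y [N HN].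
  destruct (exists_play_outcome a (map y (seq 0 N)) y) as [e <-].
  - apply agrees_map_seq.
  - rewrite length_map, length_seq. exact HN.
  - apply Ha.
Qed.
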